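(* Let $\lambda\in\mathbb{R}$, let $n$ be a positive integer and let $k$ be a positive integer. Then \[ S_{k,\lambda}(n)=\frac{(n)_{k+1,\lambda}}{k+1}+\frac{1}{k+1}\sum_{r=0}^{k-1}\binom{k+1}{r}(-1)^{k+1-r}\langle 1\rangle_{k+1-r,\lambda}\,S_{r,\lambda}(n). \]
   Context: For $\lambda\in\mathbb{R}$ the degenerate falling factorials are $(x)_{0,\lambda}=1$ and $(x)_{m,\lambda}=x(x-\lambda)\cdots(x-(m-1)\lambda)$ for $m\ge 1$, and the degenerate rising factorials are $\langle x\rangle_{0,\lambda}=1$ and $\langle x\rangle_{m,\lambda}=x(x+\lambda)(x+2\lambda)\cdots(x+(m-1)\lambda)$ for $m\ge1$. For a nonnegative integer $r$ and positive integer $n$, $S_{r,\lambda}(n)=\sum_{j=1}^{n}(j)_{r,\lambda}$ (so in particular $S_{0,\lambda}(n)=n$). *)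

From Stdlib Require Import Reals.
Open Scope R_scope.

Fixpoint dfall (lam x : R) (m : nat) : R :=
  match m with
  | O => 1
  | S m' => dfall lam x m' * (x - INR m' * lam)
  end.

Fixpoint drise (lam x : R) (m : nat) : R :=
  match m with
  | O => 1
  | S m' => drise lam x m' * (x + INR m' * lam)
  end.

Fixpoint sum_from (f : nat -> R) (a len : nat) : R :=
  match len with
  | O => 0
  | S l => sum_from f a l + f (a + l)%nat
  end.

Definition Ssum (lam : R) (r n : nat) : R :=
  sum_from (fun j => dfall lam (INR j) r) 1 n.

From Stdlib Require Import Reals Lia Factorial.
Open Scope R_scope.

(* The degenerate binomial theorem (x + y)_{m} = sum_r C(m, r) (x)_r (y)_{m-r}
   at y = -1, where (-1)_{s} = (-1)^s <1>_s, expresses (x - 1)_{k+1} through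
   (x)_{k+1}, (k + 1) (x)_k and the lower (x)_r, r < k.  Summing over x = 1..n,
   the differences (x)_{k+1} - (x - 1)_{k+1} telescope to (n)_{k+1}. *)

Lemma sum_from_ext (f g : nat -> R) a m :
  (forall i, (a <= i < a + m)%nat -> f i = g i) -> sum_from f a m = sum_from g a m.
Proof.
  induction m as [|m IH]; intros Hfg; simpl; [reflexivity|].
  rewrite IH, Hfg by (intros; try apply Hfg; lia); reflexivity.
Qed.

Lemma sum_from_add (f g : nat -> R) a m :
  sum_from (fun i => f i + g i) a m = sum_from f a m + sum_from g a m.
Proof. induction m as [|m IH]; simpl; [ring|]. rewrite IH; ring. Qed.

Lemma sum_from_scal_l c (f : nat -> R) a m :
  sum_from (fun i => c * f i) a m = c * sum_from f a m.
Proof. induction m as [|m IH]; simpl; [ring|]. rewrite IH; ring. Qed.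

Lemma sum_from_shift (f : nat -> R) a m :
  sum_from f (S a) m = sum_from (fun i => f (S i)) a m.
Proof. induction m as [|m IH]; simpl; [reflexivity|]. rewrite IH; reflexivity. Qed.

Lemma sum_from_first (f : nat -> R) a m :
  sum_from f a (S m) = f a + sum_from f (S a) m.
Proof.
  induction m as [|m IH]; simpl in *.
  - rewrite Nat.add_0_r; ring.
  - rewrite IH, Nat.add_succ_r; ring.
Qed.

Lemma sum_from_telescope (f : nat -> R) m :
  sum_from (fun i => f (S i) - f i) 0 m = f m - f 0%nat.
Proof. induction m as [|m IH]; simpl; [ring|]. rewrite IH; ring. Qed.

Lemma sum_from_swap (F : nat -> nat -> R) a m b p :
  sum_from (fun i => sum_from (fun j => F i j) b p) a m =
  sum_from (fun j => sum_from (fun i => F i j) a m) b p.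
Proof.
  induction m as [|m IH]; simpl.
  - induction p as [|p IHp]; simpl; [reflexivity|]. rewrite <- IHp; ring.
  - rewrite IH, <- sum_from_add; reflexivity.
Qed.

Lemma C_n_0 n : Binomial.C n 0 = 1.
Proof.
  unfold Binomial.C; rewrite Nat.sub_0_r; simpl.
  field; apply INR_fact_neq_0.
Qed.

Lemma C_n_n n : Binomial.C n n = 1.
Proof.
  unfold Binomial.C; rewrite Nat.sub_diag; simpl.
  field; apply INR_fact_neq_0.
Qed.

Lemma C_Sn_n n : Binomial.C (S n) n = INR (S n).
Proof.
  unfold Binomial.C; replace (S n - n)%nat with 1%nat by lia.
  rewrite fact_simpl, mult_INR; simpl (INR (fact 1)).
  field; apply INR_fact_neq_0.
Qed.

Lemma sum_pascal (f : nat -> nat -> R) m :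
  sum_from (fun r => Binomial.C m r * (f (S r) (m - r)%nat + f r (S (m - r)))) 0 (S m) =
  sum_from (fun r => Binomial.C (S m) r * f r (S m - r)%nat) 0 (S (S m)).
Proof.
  rewrite (sum_from_ext _ (fun r => Binomial.C m r * f (S r) (m - r)%nat
                                    + Binomial.C m r * f r (S (m - r)))).
  2:{ intros; ring. }
  rewrite sum_from_add, (sum_from_first (fun r => _ * f r (S (m - r)))).
  rewrite sum_from_first with (m := S m), !sum_from_shift.
  cbn [sum_from]. rewrite !Nat.add_0_l.
  rewrite (sum_from_ext (fun i => Binomial.C (S m) (S i) * _)
             (fun i => Binomial.C m i * f (S i) (m - i)%nat
                       + Binomial.C m (S i) * f (S i) (S (m - S i)))).
  2:{ intros i Hi. replace (S (m - S i)) with (m - i)%nat by lia.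
      rewrite <- pascal by lia; simpl; ring. }
  rewrite sum_from_add, !Nat.sub_0_r, !C_n_0, !C_n_n; simpl; rewrite Nat.sub_diag; ring.
Qed.

Section DegenerateFactorials.

Variable lam : R.

Lemma dfall_add x y m :
  dfall lam (x + y) m =
  sum_from (fun r => Binomial.C m r * dfall lam x r * dfall lam y (m - r)) 0 (S m).
Proof.
  induction m as [|m IH].
  - simpl; rewrite C_n_0; ring.
  - change (dfall lam (x + y) (S m)) with (dfall lam (x + y) m * (x + y - INR m * lam)).
    rewrite IH, Rmult_comm, <- sum_from_scal_l.
    (* [x + y - m lam] splits as [(x - r lam) + (y - (m - r) lam)], raising one factorial or the other. *)
    rewrite (sum_from_ext _ (fun r => Binomial.C m r *
      (dfall lam x (S r) * dfall lam y (m - r) + dfall lam x r * dfall lam y (S (m - r))))).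
    2:{ intros r Hr; simpl; rewrite minus_INR by lia; ring. }
    etransitivity; [exact (sum_pascal (fun r s => dfall lam x r * dfall lam y s) m) |].
    apply sum_from_ext; intros; ring.
Qed.

Lemma dfall_opp_one m : dfall lam (-1) m = (-1) ^ m * drise lam 1 m.
Proof. induction m as [|m IH]; simpl; [ring|]. rewrite IH; ring. Qed.

Lemma dfall_0_succ m : dfall lam 0 (S m) = 0.
Proof. induction m as [|m IH]; simpl in *; [ring|]. rewrite IH; ring. Qed.

Lemma dfall_backward_difference x k :
  INR (S k) * dfall lam x k =
  dfall lam x (S k) - dfall lam (x - 1) (S k)
  + sum_from (fun r => Binomial.C (S k) r * (-1) ^ (S k - r)
                       * drise lam 1 (S k - r) * dfall lam x r) 0 k.
Proof.
  replace (x - 1) with (x + -1) by ring.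
  rewrite dfall_add; cbn [sum_from]; rewrite !Nat.add_0_l.
  rewrite (sum_from_ext (fun r => _ * dfall lam (-1) (S k - r))
             (fun r => Binomial.C (S k) r * (-1) ^ (S k - r)
                       * drise lam 1 (S k - r) * dfall lam x r))
    by (intros; rewrite dfall_opp_one; ring).
  replace (S k - k)%nat with 1%nat by lia.
  rewrite Nat.sub_diag, C_Sn_n, C_n_n; simpl; ring.
Qed.

Lemma Ssum_recurrence n k :
  INR (S k) * Ssum lam k n =
  dfall lam (INR n) (S k)
  + sum_from (fun r => Binomial.C (S k) r * (-1) ^ (S k - r)
                       * drise lam 1 (S k - r) * Ssum lam r n) 0 k.
Proof.
  unfold Ssum; rewrite <- sum_from_scal_l, sum_from_shift.
  rewrite (sum_from_ext _ (fun i =>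
    (dfall lam (INR (S i)) (S k) - dfall lam (INR i) (S k))
    + sum_from (fun r => Binomial.C (S k) r * (-1) ^ (S k - r)
                         * drise lam 1 (S k - r) * dfall lam (INR (S i)) r) 0 k)).
  2:{ intros i _; rewrite dfall_backward_difference.
      replace (INR (S i) - 1) with (INR i) by (rewrite S_INR; ring); reflexivity. }
  rewrite sum_from_add, (sum_from_telescope (fun i => dfall lam (INR i) (S k))).
  change (INR 0) with 0; rewrite dfall_0_succ, Rminus_0_r, sum_from_swap.
  f_equal; apply sum_from_ext; intros r _.
  rewrite sum_from_scal_l, sum_from_shift; reflexivity.
Qed.

End DegenerateFactorials.

Theorem theorem2p4 (lam : R) (n k : nat) (hn : (1 <= n)%nat) (hk : (1 <= k)%nat) :
  Ssum lam k n =
    dfall lam (INR n) (k + 1) / INR (k + 1)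
    + / INR (k + 1) *
      sum_from (fun r => Binomial.C (k + 1) r * (-1) ^ (k + 1 - r)
                         * drise lam 1 (k + 1 - r) * Ssum lam r n) 0 k.
Proof.
  rewrite !Nat.add_1_r.
  assert (Hk : INR (S k) <> 0) by (apply not_0_INR; lia).
  apply (Rmult_eq_reg_l (INR (S k))); [|exact Hk].
  rewrite Ssum_recurrence; field; exact Hk.
Qed.
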